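(* Let $p$ be a prime, $n = ms$, and $B \in \mathbb{Z}_p^{n\times n}$ nonsingular, and let $u\in\mathbb{Z}_p^{s\times n}$, $v\in\mathbb{Z}_p^{n\times s}$ be such that $U$ (block rows $u, uB, \dots, uB^{m-1}$) and $V = [v \mid Bv\mid\cdots\mid B^{m-1}v]$ are nonsingular, and let $H = UBV$. Suppose: (i) for any $w \in \mathbb{Z}_p^{n}$ the product $Bw$ can be computed with $\mu(n)$ operations in $\mathbb{Z}_p$; (ii) for any $w\in\mathbb{Z}_p^n$ and $x \in \mathbb{Z}_p^{s}$ the products $uw$ and $vx$ can be computed with $\tilde O(n)$ operations in $\mathbb{Z}_p$; (iii) a representation of $H^{-1}$ has been precomputed which allows $H^{-1}y$ to be computed for any $y \in \mathbb{Z}_p^n$ with $\tilde O(ns)$ operations in $\mathbb{Z}_p$. Then for any $w \in \mathbb{Z}_p^{n}$, the vector $B^{-1}w$ can be computed with $2(m-1)\mu(n) + \tilde O(n(m+s))$ operations in $\mathbb{Z}_p$.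
   Context: $\tilde O(f)$ denotes $O(f \cdot (\log f)^{c})$ for some constant $c$, i.e. big-O up to polylogarithmic factors. *)

From HB Require Import structures.
From mathcomp Require Import all_boot all_order all_algebra.
Set Implicit Arguments. Unset Strict Implicit. Unset Printing Implicit Defensive.
Import Order.TTheory GRing.Theory Num.Theory.
Local Open Scope ring_scope.

(* Every instruction counts as
   one operation in the field (constants included, which is conservative).
   Out-of-range register references read 0. *)

Inductive instr (F : Type) :=
  | IAdd of nat & nat
  | ISub of nat & nat
  | IMul of nat & nat
  | IInv of nat
  | ICst of F.

Section SLP.
Variable F : fieldType.

Definition step (regs : seq F) (ins : instr F) : F :=
  match ins with
  | IAdd i j => nth 0 regs i + nth 0 regs j
  | ISub i j => nth 0 regs i - nth 0 regs j
  | IMul i j => nth 0 regs i * nth 0 regs j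
  | IInv i => (nth 0 regs i)^-1
  | ICst c => c
  end.

Fixpoint run (regs : seq F) (code : seq (instr F)) : seq F :=
  match code with
  | [::] => regs
  | ins :: code' => run (rcons regs (step regs ins)) code'
  end.

Record slp := SLP { slp_code : seq (instr F); slp_out : seq nat }.

Definition slp_cost (P : slp) : nat := size (slp_code P).

Definition slp_inputs k (x : 'cV[F]_k) : seq F := [seq x i 0 | i <- enum 'I_k].

Definition slp_computes k l (P : slp) (f : 'cV[F]_k -> 'cV[F]_l) : Prop :=
  size (slp_out P) = l /\
  forall (x : 'cV[F]_k) (i : 'I_l),
    nth 0 (run (slp_inputs x) (slp_code P)) (nth 0%N (slp_out P) i) = f x i 0.

End SLP.

Definition lg (f : nat) : nat := (trunc_log 2 f).+1.

Lemma sum_const_block (m s : nat) : (\sum_(i < m) s)%N = (m * s)%N.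
Proof. by rewrite sum_nat_const card_ord. Qed.

Definition krylovU (R : pzRingType) (m s : nat) (B : 'M[R]_(m * s))
    (u : 'M[R]_(s, m * s)) : 'M[R]_(m * s) :=
  castmx (sum_const_block m s, erefl (m * s)%N)
    (@mxcol R m (fun _ => s) (m * s)%N (fun i => u *m B ^+ i)).

Definition krylovV (R : pzRingType) (m s : nat) (B : 'M[R]_(m * s))
    (v : 'M[R]_(m * s, s)) : 'M[R]_(m * s) :=
  castmx (erefl (m * s)%N, sum_const_block m s)
    (@mxrow R m (fun _ => s) (m * s)%N (fun i => B ^+ i *m v)).

From HB Require Import structures.
From mathcomp Require Import all_boot all_order all_algebra zify.
Set Implicit Arguments. Unset Strict Implicit. Unset Printing Implicit Defensive.
Import GRing.Theory Num.Theory.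
Local Open Scope ring_scope.

(* Since [H = U B V], we have [B^-1 = V H^-1 U], so [B^-1 w = V (H^-1 (U w))].  The
   vector [U w] stacks the blocks [u B^t w] for [t < m]: it costs [m - 1] products by [B]
   and [m] products by [u].  Writing [y_t] for the blocks of [y = H^-1 U w], Horner's rule
   [V y = v y_0 + B (v y_1 + B (... + B (v y_(m-1))))] costs [m - 1] products by [B] and
   [m] products by [v].  Everything else (one product by [H^-1], [m - 1] vector additions
   and copying vectors between subprograms) costs [O(nm + ns)] operations.  The
   subprograms are glued into one straight-line program by relocating their registers. *)

Section RegisterFiles.
Variable F : fieldType.
Implicit Types (R r t : seq F) (c : seq (instr F)).

Lemma run_cat R c1 c2 : run R (c1 ++ c2) = run (run R c1) c2.
Proof. by elim: c1 R => //= ins c1 IH R. Qed.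

Lemma size_run R c : size (run R c) = (size R + size c)%N.
Proof. by elim: c R => [|ins c IH] R /=; rewrite ?addn0 // IH size_rcons addSnnS. Qed.

Lemma nth_run R c j : (j < size R)%N -> nth 0 (run R c) j = nth 0 R j.
Proof.
elim: c R => //= ins c IH R ltjR.
by rewrite IH ?nth_rcons ?ltjR // size_rcons ltnS ltnW.
Qed.

Definition reads_below (N : nat) (ins : instr F) : bool :=
  match ins with
  | IAdd i j | ISub i j | IMul i j => (i < N)%N && (j < N)%N
  | IInv i => (i < N)%N
  | ICst _ => true
  end.

Lemma step_cat R t ins : reads_below (size R) ins -> step (R ++ t) ins = step R ins.
Proof.
case: ins => [i j|i j|i j|i|a] //= => [/andP[hi hj]|/andP[hi hj]|/andP[hi hj]|hi];
  by rewrite !nth_cat ?hi ?hj.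
Qed.

Lemma run_reads_below R c : all (reads_below (size R)) c -> run R c = R ++ map (step R) c.
Proof.
suff run_catr t : all (reads_below (size R)) c -> run (R ++ t) c = R ++ t ++ map (step R) c.
  by move=> /(run_catr [::]); rewrite cats0.
elim: c t => [|ins c IH] t /=; first by rewrite cats0.
by case/andP=> rd rdc; rewrite step_cat // -cats1 -catA IH // -catA.
Qed.

Definition shift_instr (b : nat) (ins : instr F) : instr F :=
  match ins with
  | IAdd i j => IAdd F (b + i) (b + j)
  | ISub i j => ISub F (b + i) (b + j)
  | IMul i j => IMul F (b + i) (b + j)
  | IInv i => IInv F (b + i)
  | ICst a => ICst a
  end.

Lemma step_shift R r ins : step (R ++ r) (shift_instr (size R) ins) = step r ins.
Proof.
have nth_shift i : nth 0 (R ++ r) (size R + i) = nth 0 r i.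
  by rewrite nth_cat ltnNge leq_addr /= addKn.
by case: ins => * /=; rewrite ?nth_shift.
Qed.

Lemma run_shift R r c : run (R ++ r) (map (shift_instr (size R)) c) = R ++ run r c.
Proof. by elim: c r => //= ins c IH r; rewrite step_shift rcons_cat -IH. Qed.

Lemma size_slp_inputs k (x : 'cV[F]_k) : size (slp_inputs x) = k.
Proof. by rewrite size_map size_enum_ord. Qed.

Lemma nth_slp_inputs k (x : 'cV[F]_k) (i : 'I_k) : nth 0 (slp_inputs x) i = x i 0.
Proof. by rewrite (nth_map i) ?size_enum_ord // nth_ord_enum. Qed.

Definition hold R (ix : seq nat) (vs : seq F) : Prop :=
  all (fun j => j < size R)%N ix /\ map (nth 0 R) ix = vs.

Lemma size_hold R ix vs : hold R ix vs -> size ix = size vs.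
Proof. by case=> _ <-; rewrite size_map. Qed.

Lemma hold_run R c ix vs : hold R ix vs -> hold (run R c) ix vs.
Proof.
case=> /allP ixR <-; split.
  by apply/allP=> j /ixR ltjR; rewrite size_run (leq_trans ltjR) ?leq_addr.
by apply/eq_in_map => j /ixR; apply: nth_run.
Qed.

Lemma hold_cat R a b vs ws : hold R a vs -> hold R b ws -> hold R (a ++ b) (vs ++ ws).
Proof. by case=> aR <- [bR <-]; rewrite /hold all_cat aR bR map_cat. Qed.

Lemma hold_suffix R t : hold (R ++ t) (iota (size R) (size t)) t.
Proof.
split; first by apply/allP=> j; rewrite mem_iota size_cat => /andP[].
by rewrite map_nth_iota ?size_cat ?addKn // drop_size_cat ?take_size.
Qed.

Lemma hold_iota R a k (x : 'cV[F]_k) (i : 'I_k) :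
  hold R (iota a k) (slp_inputs x) -> nth 0 R (a + i) = x i 0 /\ (a + i < size R)%N.
Proof.
case=> /allP iR e; have ai : (a + i)%N \in iota a k by rewrite mem_iota leq_addr ltn_add2l /=.
split; last exact: iR.
by rewrite -nth_slp_inputs -e (nth_map 0%N) ?size_iota // nth_iota.
Qed.

Definition zero_reg R z : bool := (z < size R)%N && (nth 0 R z == 0).

Lemma zero_reg_run R c z : zero_reg R z -> zero_reg (run R c) z.
Proof.
case/andP=> zR z0; rewrite /zero_reg nth_run // z0 size_run.
by rewrite (leq_trans zR) ?leq_addr.
Qed.

(* Registers are copied by adding the register [z], which holds 0. *)
Definition copy_code (z : nat) (ix : seq nat) : seq (instr F) := [seq IAdd F j z | j <- ix].

Lemma run_copy_code R z ix vs : zero_reg R z -> hold R ix vs -> run R (copy_code z ix) = R ++ vs.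
Proof.
case/andP=> zR /eqP z0 [/allP ixR <-].
rewrite run_reads_below; last by rewrite all_map; apply/allP=> j /ixR /= ->.
by rewrite -map_comp; congr (_ ++ _); apply: eq_map => j /=; rewrite z0 addr0.
Qed.

(* An output index of a program beyond its last register reads 0, whence [ICst 0]. *)
Definition copy_out_code (z N bound : nat) (outs : seq nat) : seq (instr F) :=
  [seq if (o < bound)%N then IAdd F (N + o) z else ICst 0 | o <- outs].

Lemma run_copy_out_code R r z outs : zero_reg R z ->
  run (R ++ r) (copy_out_code z (size R) (size r) outs) = R ++ r ++ map (nth 0 r) outs.
Proof.
case/andP=> zR /eqP z0.
rewrite run_reads_below; last first.
  rewrite all_map; apply/allP=> o _ /=; case: ifP => //= lt.
  by rewrite size_cat ltn_add2l lt (leq_trans zR) ?leq_addr.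
rewrite -catA -map_comp; congr (_ ++ (_ ++ _)); apply: eq_map => o /=.
case: ifP => [_|/negbT] /=; last by rewrite -leqNgt => ge; rewrite nth_default.
by rewrite !nth_cat zR z0 addr0 ltnNge leq_addr /= addKn.
Qed.

Lemma slp_computesP k l (P : slp F) (f : 'cV[F]_k -> 'cV[F]_l) :
  slp_computes P f <->
  forall x, map (nth 0 (run (slp_inputs x) (slp_code P))) (slp_out P) = slp_inputs (f x).
Proof.
split=> [[sz comp] x | comp].
  apply: (@eq_from_nth F 0) => [|i]; first by rewrite size_slp_inputs size_map sz.
  rewrite size_map sz => lt.
  by rewrite (nth_map 0%N) ?sz // (comp x (Ordinal lt)) -(nth_slp_inputs _ (Ordinal lt)).
have sz : size (slp_out P) = l.
  pose R0 := run (slp_inputs (0 : 'cV[F]_k)) (slp_code P).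
  by rewrite -(size_map (nth 0 R0) (slp_out P)) comp size_slp_inputs.
by split=> // x i; rewrite -nth_slp_inputs -comp (nth_map 0%N) ?sz.
Qed.

(* [P] relocated to run on top of a register file of size [N] whose register [z] is 0. *)
Definition slp_call (z N : nat) (ix : seq nat) (P : slp F) : seq (instr F) :=
  copy_code z ix ++ map (shift_instr N) (slp_code P) ++
  copy_out_code z N (size ix + slp_cost P) (slp_out P).

Lemma size_slp_call z N ix P :
  size (slp_call z N ix P) = (size ix + slp_cost P + size (slp_out P))%N.
Proof. by rewrite !size_cat !size_map addnA. Qed.

Section Call.
Variables (k l : nat) (P : slp F) (f : 'cV[F]_k -> 'cV[F]_l).
Hypothesis Pf : slp_computes P f.

Lemma run_slp_call z R ix x : zero_reg R z -> hold R ix (slp_inputs x) ->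
  run R (slp_call z (size R) ix P) = R ++ run (slp_inputs x) (slp_code P) ++ slp_inputs (f x).
Proof.
move=> zR hx; rewrite /slp_call !run_cat (run_copy_code zR hx) run_shift.
have -> : (size ix + slp_cost P)%N = size (run (slp_inputs x) (slp_code P)).
  by rewrite size_run (size_hold hx).
by rewrite run_copy_out_code // (proj1 (slp_computesP P f) Pf).
Qed.

Lemma slp_call_spec z R ix x : zero_reg R z -> hold R ix (slp_inputs x) ->
  let R' := run R (slp_call z (size R) ix P) in
  size R' = (size R + k + slp_cost P + l)%N /\
  hold R' (iota (size R + k + slp_cost P) l) (slp_inputs (f x)).
Proof.
move=> zR hx /=; rewrite (run_slp_call zR hx) catA.
set R1 := R ++ _.
have sz : size R1 = (size R + k + slp_cost P)%N.
  by rewrite size_cat size_run size_slp_inputs addnA.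
rewrite size_cat (size_slp_inputs (f x)) -sz; split=> //.
by have := hold_suffix R1 (slp_inputs (f x)); rewrite size_slp_inputs.
Qed.

End Call.

Definition add_code (a b k : nat) : seq (instr F) :=
  [seq IAdd F (a + i) (b + i) | i <- iota 0 k].

Lemma run_add_code R a b k (x y : 'cV[F]_k) :
  hold R (iota a k) (slp_inputs x) -> hold R (iota b k) (slp_inputs y) ->
  run R (add_code a b k) = R ++ slp_inputs (x + y).
Proof.
move=> hx hy; rewrite run_reads_below; last first.
  rewrite all_map; apply/allP=> i; rewrite mem_iota => /= lt.
  by rewrite (hold_iota (Ordinal lt) hx).2 (hold_iota (Ordinal lt) hy).2.
rewrite -map_comp; congr (_ ++ _).
apply: (@eq_from_nth F 0) => [|i]; first by rewrite size_slp_inputs size_map size_iota.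
rewrite size_map size_iota => lt.
rewrite (nth_map 0%N) ?size_iota // nth_iota //= (nth_slp_inputs _ (Ordinal lt)).
by rewrite mxE (hold_iota (Ordinal lt) hx).1 (hold_iota (Ordinal lt) hy).1.
Qed.

End RegisterFiles.

Lemma nth_flatten_uniform T x0 (f : nat -> seq T) s a m t r :
  (forall i, size (f i) = s) -> (r < s)%N -> (t < m)%N ->
  nth x0 (flatten [seq f i | i <- iota a m]) (t * s + r) = nth x0 (f (a + t)%N) r.
Proof.
move=> sz rs; elim: m a t => // m IH a [|t] tm /=; rewrite nth_cat sz.
  by rewrite mul0n add0n rs addn0.
by rewrite mulSn -addnA ltnNge leq_addr /= addKn IH // addSnnS.
Qed.

Lemma sum_nat_const_lt m s i : (i <= m)%N -> (\sum_(k < m | (k < i)%N) s)%N = (i * s)%N.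
Proof.
move=> im.
transitivity (\sum_(0 <= k < m | xpredT k && (k < i)%N) s)%N; first by rewrite big_mkord.
by rewrite -big_nat_widen // sum_nat_const_nat subn0.
Qed.

Lemma castmx_mull (R : pzRingType) n1 n2 (e : n1 = n2) k p (A : 'M[R]_(n1, k)) (C : 'M_(k, p)) :
  castmx (e, erefl k) A *m C = castmx (e, erefl p) (A *m C).
Proof. by case: n2 / e; rewrite !castmx_id. Qed.

Lemma castmx_mulmx (R : pzRingType) n1 n2 (e : n1 = n2) k p (A : 'M[R]_(k, n1)) (C : 'M_(n1, p)) :
  castmx (erefl k, e) A *m castmx (e, erefl p) C = A *m C.
Proof. by case: n2 / e; rewrite !castmx_id. Qed.

Lemma mul_invmx_sandwich (R : comUnitRingType) n (A B C : 'M[R]_n) (w : 'cV_n) :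
  A \in unitmx -> B \in unitmx -> C \in unitmx ->
  C *m (invmx (A *m B *m C) *m (A *m w)) = invmx B *m w.
Proof.
move=> uA uB uC; have uABC : A *m B *m C \in unitmx by rewrite !unitmx_mul uA uB uC.
have -> : A *m w = A *m B *m C *m (invmx C *m (invmx B *m w)).
  by rewrite -!mulmxA (mulKVmx uC) (mulKVmx uB).
by rewrite (mulKmx uABC) (mulKVmx uC).
Qed.

Section KrylovBlocks.
Variables (F : fieldType) (m s : nat).
Local Notation n := (m * s)%N.

Lemma tagnat_Rank_val (i : 'I_m) (r : 'I_s) :
  nat_of_ord (@tagnat.Rank m (fun _ => s) i r) = (i * s + r)%N.
Proof. by rewrite tagnat.RankEsum sum_nat_const_lt // ltnW. Qed.

Definition col_block (y : 'cV[F]_n) (t : nat) : 'cV[F]_s :=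
  \col_(r < s) nth 0 (slp_inputs y) (t * s + r).

Lemma slp_inputs_col_block y t : (t < m)%N ->
  slp_inputs (col_block y t) = take s (drop (t * s) (slp_inputs y)).
Proof.
move=> tm; have le : (t * s + s <= n)%N by rewrite -mulSnr leq_mul2r tm orbT.
apply: (@eq_from_nth F 0) => [|r].
  by rewrite size_slp_inputs size_take size_drop size_slp_inputs; case: ltnP => //; lia.
rewrite size_slp_inputs => rs.
by rewrite (nth_slp_inputs _ (Ordinal rs)) mxE nth_take // nth_drop.
Qed.

Lemma hold_col_block R o (y : 'cV[F]_n) t : (t < m)%N ->
  hold R (iota o n) (slp_inputs y) -> hold R (iota (o + t * s) s) (slp_inputs (col_block y t)).
Proof.
move=> tm [/allP iR e]; have le : (t * s + s <= n)%N by rewrite -mulSnr leq_mul2r tm orbT.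
rewrite slp_inputs_col_block // -e -map_drop -map_take.
have -> : iota (o + t * s) s = take s (drop (t * s) (iota o n)).
  by rewrite drop_iota take_iota; congr iota; lia.
by split=> //; apply/allP=> j /mem_take /mem_drop /iR.
Qed.

Lemma slp_inputs_krylovU (B : 'M[F]_n) u (w : 'cV_n) :
  slp_inputs (krylovU B u *m w) =
  flatten [seq slp_inputs (u *m (B ^+ t *m w)) | t <- iota 0 m].
Proof.
rewrite /krylovU castmx_mull mxcol_mul.
apply: (@eq_from_nth F 0) => [|j].
  rewrite size_slp_inputs size_flatten /shape -map_comp.
  rewrite (eq_map (g := fun _ => s)) => [|t /=]; last by rewrite size_slp_inputs.
  by elim: m 0%N => //= k IH a; rewrite -IH mulSn.
rewrite size_slp_inputs => lt.
rewrite (nth_slp_inputs _ (Ordinal lt)) castmxE /= mxE.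
set j' := cast_ord _ _.
have -> : j = (tagnat.sig1 j' * s + tagnat.sig2 j')%N by rewrite -tagnat_Rank_val tagnat.sig2K.
rewrite (@nth_flatten_uniform _ 0 (fun t => slp_inputs (u *m (B ^+ t *m w))) s) //;
  last by move=> i; rewrite size_slp_inputs.
rewrite add0n (nth_slp_inputs _ (tagnat.sig2 j')) mulmxA; congr (_ _ _); exact: val_inj.
Qed.

Lemma krylovV_mul (B : 'M[F]_n) v (y : 'cV_n) :
  krylovV B v *m y = \sum_(t < m) B ^+ t *m (v *m col_block y t).
Proof.
rewrite /krylovV.
have -> : y = castmx (sum_const_block m s, erefl 1%N)
   (castmx (esym (sum_const_block m s), erefl 1%N) y) by rewrite castmxKV.
rewrite castmx_mulmx -[X in _ *m X]submxcolK mul_mxrow_mxcol.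
apply: eq_bigr => t _; rewrite mulmxA; congr (_ *m _).
apply/matrixP => r c; rewrite !mxE castmxE /= ord1.
have lt : (t * s + r < n)%N.
  by have := ltn_ord (@tagnat.Rank m (fun _ => s) t r); rewrite tagnat_Rank_val sum_const_block.
rewrite castmxKV (nth_slp_inputs _ (Ordinal lt)); congr (y _ _).
by apply: val_inj; rewrite /= -tagnat_Rank_val.
Qed.

Section Horner.
Variables (B : 'M[F]_n) (v : 'M[F]_(n, s)) (y : 'cV[F]_n).

Definition horner_tail (j : nat) : 'cV[F]_n :=
  \sum_(t < m - j) B ^+ t *m (v *m col_block y (j + t)).

Lemma horner_tail0 : horner_tail 0 = krylovV B v *m y.
Proof. by rewrite krylovV_mul /horner_tail subn0; apply: eq_bigr => t _; rewrite add0n. Qed.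

Lemma horner_tail_last : (0 < m)%N -> horner_tail m.-1 = v *m col_block y m.-1.
Proof.
move=> m0; rewrite /horner_tail (_ : (m - m.-1 = 1)%N); last by lia.
by rewrite big_ord1 expr0 mul1mx addn0.
Qed.

Lemma horner_tailS j : (j < m)%N -> horner_tail j = B *m horner_tail j.+1 + v *m col_block y j.
Proof.
move=> jm; rewrite /horner_tail (_ : (m - j = (m - j.+1).+1)%N); last by lia.
rewrite big_ord_recl /= expr0 mul1mx addn0 addrC mulmx_sumr; congr (_ + _).
by apply: eq_bigr => i _; rewrite /bump /= add1n -addSnnS exprS -mulmxE !mulmxA.
Qed.

End Horner.
End KrylovBlocks.

Section InverseProgram.
Variables (F : fieldType) (m s : nat).
Local Notation n := (m * s)%N.
Variables (B : 'M[F]_n) (u : 'M[F]_(s, n)) (v : 'M[F]_(n, s)) (PB Pu Pv PH : slp F).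
Local Notation H := (krylovU B u *m B *m krylovV B v).
Hypothesis PB_B : slp_computes PB (fun w : 'cV_n => B *m w).
Hypothesis Pu_u : slp_computes Pu (fun w : 'cV_n => u *m w).
Hypothesis Pv_v : slp_computes Pv (fun x : 'cV_s => v *m x).
Hypothesis PH_invH : slp_computes PH (fun y : 'cV_n => invmx H *m y).
Local Notation cb := (slp_cost PB).
Local Notation cu := (slp_cost Pu).
Local Notation cv := (slp_cost Pv).
Local Notation ch := (slp_cost PH).
(* Register [n], right after the input, is set to 0 once and for all. *)
Local Notation z := n.

(* Starting from [B^a w] in registers [c, c + n), computes [u B^t w] for [a <= t <= a + j]. *)
Fixpoint krylov_u_code (j N c : nat) : seq (instr F) * seq nat :=
  let Nu := (N + n + cu)%N in
  match j with
  | 0 => (slp_call z N (iota c n) Pu, iota Nu s)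
  | j'.+1 =>
    let N1 := (Nu + s)%N in
    let r := krylov_u_code j' (N1 + n + cb + n) (N1 + n + cb) in
    (slp_call z N (iota c n) Pu ++ slp_call z N1 (iota c n) PB ++ r.1, iota Nu s ++ r.2)
  end.

(* Horner's rule for [V y], [y] in registers [o, o + n), from [horner_tail j] in [acc, acc + n). *)
Fixpoint horner_code (o j N acc : nat) : seq (instr F) * nat :=
  match j with
  | 0 => ([::], acc)
  | j'.+1 =>
    let N1 := (N + n + cb + n)%N in
    let N2 := (N1 + s + cv + n)%N in
    let r := horner_code o j' (N2 + n) N2 in
    (slp_call z N (iota acc n) PB ++ slp_call z N1 (iota (o + j' * s) s) Pv ++
       add_code F (N + n + cb) (N1 + s + cv) n ++ r.1, r.2)
  end.

Definition inverse_slp : slp F :=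
  let r1 := krylov_u_code m.-1 n.+1 0 in
  let N1 := (n.+1 + size r1.1)%N in
  let o := (N1 + n + ch)%N in
  let acc := (o + n + s + cv)%N in
  let r2 := horner_code o m.-1 (acc + n) acc in
  SLP (ICst 0 :: r1.1 ++ slp_call z N1 r1.2 PH ++
       slp_call z (o + n) (iota (o + m.-1 * s) s) Pv ++ r2.1) (iota r2.2 n).

Lemma size_krylov_u_code j N c :
  size (krylov_u_code j N c).1 = (j.+1 * (n + cu + s) + j * (2 * n + cb))%N /\
  size (krylov_u_code j N c).2 = (j.+1 * s)%N.
Proof.
elim: j N c => [|j IH] N c /=.
  2: rewrite !(size_cat (slp_call _ _ _ _)) size_cat (proj1 (IH _ _)) (proj2 (IH _ _)).
all: rewrite !size_slp_call !size_iota (proj1 Pu_u) ?(proj1 PB_B); lia.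
Qed.

Lemma size_horner_code o j N acc :
  size (horner_code o j N acc).1 = (j * (4 * n + cb + cv + s))%N.
Proof.
elim: j N acc => [|j IH] N acc //=.
rewrite !(size_cat (slp_call _ _ _ _)) size_cat IH !size_slp_call size_map !size_iota.
by rewrite (proj1 Pv_v) (proj1 PB_B); lia.
Qed.

Lemma inverse_slp_cost : (0 < m)%N ->
  slp_cost inverse_slp = (1 + m * (n + cu + s) + m.-1 * (2 * n + cb) + (2 * n + ch)
                            + (s + cv + n) + m.-1 * (4 * n + cb + cv + s))%N.
Proof.
move=> m_gt0; have [sc so] := size_krylov_u_code m.-1 n.+1 0.
rewrite {1}/slp_cost /= size_cat !(size_cat (slp_call _ _ _ _)) sc size_horner_code.
by rewrite !size_slp_call so size_iota (prednK m_gt0) (proj1 PH_invH) (proj1 Pv_v); lia.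
Qed.

Lemma run_krylov_u_code (w : 'cV_n) j : forall a R c,
  zero_reg R z -> hold R (iota c n) (slp_inputs (B ^+ a *m w)) ->
  hold (run R (krylov_u_code j (size R) c).1) (krylov_u_code j (size R) c).2
       (flatten [seq slp_inputs (u *m (B ^+ t *m w)) | t <- iota a j.+1]).
Proof.
elim: j => [|j IH] a R c zR hw /=.
  by have [_] := slp_call_spec Pu_u zR hw; rewrite cats0.
have [s1 h1] := slp_call_spec Pu_u zR hw.
set R1 := run R _ in s1 h1.
have hw1 := hold_run (slp_call z (size R) (iota c n) Pu) hw.
have [s2 h2] := slp_call_spec PB_B (zero_reg_run _ zR) hw1.
have eB : B *m (B ^+ a *m w) = B ^+ a.+1 *m w by rewrite mulmxA exprS.
rewrite -/R1 eB in h2; rewrite -/R1 in s2.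
set R2 := run R1 _ in s2 h2.
rewrite -s1 run_cat -/R1 run_cat -/R2 -s2.
apply: (hold_cat (hold_run _ (hold_run _ h1))).
exact: IH (zero_reg_run _ (zero_reg_run _ zR)) h2.
Qed.

Lemma run_horner_code (y : 'cV_n) o j : forall R acc,
  (j < m)%N -> zero_reg R z -> hold R (iota o n) (slp_inputs y) ->
  hold R (iota acc n) (slp_inputs (horner_tail B v y j)) ->
  hold (run R (horner_code o j (size R) acc).1) (iota (horner_code o j (size R) acc).2 n)
       (slp_inputs (horner_tail B v y 0)).
Proof.
elim: j => [|j IH] R acc jm zR hy hacc //=.
have [s1 h1] := slp_call_spec PB_B zR hacc.
set R1 := run R _ in s1 h1.
have hyj := hold_col_block (ltnW jm) (hold_run (slp_call z (size R) (iota acc n) PB) hy).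
have [s2 h2] := slp_call_spec Pv_v (zero_reg_run _ zR) hyj.
set R2 := run R1 _ in s2 h2.
have h1' := hold_run (slp_call z (size R1) (iota (o + j * s) s) Pv) h1.
set R3 := run R2 (add_code F (size R + n + cb) (size R1 + s + cv) n).
have R3E : R3 = R2 ++ slp_inputs (horner_tail B v y j).
  by rewrite /R3 (run_add_code h1' h2) -horner_tailS // ltnW.
have h3 : hold R3 (iota (size R2) n) (slp_inputs (horner_tail B v y j)).
  by have := hold_suffix R2 (slp_inputs (horner_tail B v y j)); rewrite R3E size_slp_inputs.
have sR3 : size R3 = (size R2 + n)%N by rewrite R3E size_cat size_slp_inputs.
rewrite -s1 run_cat -/R1 run_cat -/R2 -s2 run_cat -/R3 -sR3.
apply: IH (ltnW jm) (zero_reg_run _ (zero_reg_run _ (zero_reg_run _ zR))) _ h3.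
exact: hold_run _ (hold_run _ (hold_run _ hy)).
Qed.

Hypotheses (m_gt0 : (0 < m)%N) (B_unit : B \in unitmx).
Hypotheses (U_unit : krylovU B u \in unitmx) (V_unit : krylovV B v \in unitmx).

Lemma inverse_slp_computes : slp_computes inverse_slp (fun w => invmx B *m w).
Proof.
apply/slp_computesP => w; rewrite /inverse_slp /=.
set R0 := rcons _ _.
have sR0 : size R0 = n.+1 by rewrite size_rcons (size_slp_inputs w).
have zR0 : zero_reg R0 z.
  by rewrite /zero_reg sR0 ltnSn /R0 nth_rcons (size_slp_inputs w) ltnn !eqxx.
have hw : hold R0 (iota 0 n) (slp_inputs (B ^+ 0 *m w)).
  have := hold_run [:: ICst 0] (hold_suffix [::] (slp_inputs w)).
  by rewrite /= (size_slp_inputs w) expr0 mul1mx.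
have hU := @run_krylov_u_code w m.-1 0 R0 0 zR0 hw.
rewrite (prednK m_gt0) -slp_inputs_krylovU in hU.
rewrite -sR0 run_cat.
set R1 := run R0 _ in hU.
have sR1 : size R1 = (size R0 + size (krylov_u_code m.-1 (size R0) 0).1)%N.
  exact: size_run.
rewrite -sR1 run_cat.
have [sR2 hy] := slp_call_spec PH_invH (zero_reg_run _ zR0) hU.
set y := invmx H *m _ in hy.
set R2 := run R1 _ in sR2 hy.
have m1_lt : (m.-1 < m)%N by rewrite ltn_predL.
have [sR3 hacc] :=
  slp_call_spec Pv_v (zero_reg_run _ (zero_reg_run _ zR0)) (hold_col_block m1_lt hy).
set R3 := run R2 _ in sR3 hacc.
rewrite -(horner_tail_last B _ _ m_gt0) in hacc.
rewrite -/R1 -/R2 -sR2 run_cat -/R3 -sR3.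
rewrite -(mul_invmx_sandwich w U_unit B_unit V_unit) -/y -horner_tail0.
by have [] := run_horner_code m1_lt (zero_reg_run _ (zero_reg_run _ (zero_reg_run _ zR0)))
  (hold_run _ hy) hacc.
Qed.

End InverseProgram.

Lemma leq_lg_exp c a b : (a <= b)%N -> (lg a ^ c <= lg b ^ c)%N.
Proof. by case: c => // c ab; rewrite leq_exp2r // /lg ltnS leq_trunc_log. Qed.

Lemma inverse_cost_bound (m s C X mu cb cu cv ch : nat) :
  (0 < m)%N -> (0 < s)%N -> (0 < X)%N -> (cb <= mu)%N ->
  (cu <= C * (m * s) * X)%N -> (cv <= C * (m * s) * X)%N ->
  (ch <= C * (m * s * s) * X)%N ->
  (1 + m * (m * s + cu + s) + m.-1 * (2 * (m * s) + cb) + (2 * (m * s) + ch)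
     + (s + cv + m * s) + m.-1 * (4 * (m * s) + cb + cv + s)
   <= 2 * (m - 1) * mu + (2 * C + 8) * (m * s * (m + s)) * X)%N.
Proof. case: m => // m _ s_gt0 X_gt0 cbB cuB cvB chB; rewrite /= subSS subn0; nia. Qed.

Theorem mainTheorem4 :
  forall c C : nat, exists c' C' : nat,
  forall (p : nat) (m s : nat) (mu : nat -> nat)
         (B : 'M['F_p]_(m * s)) (u : 'M['F_p]_(s, m * s)) (v : 'M['F_p]_(m * s, s)),
    prime p -> (0 < m)%N -> (0 < s)%N ->
    B \in unitmx ->
    krylovU B u \in unitmx ->
    krylovV B v \in unitmx ->
    (exists PB : slp 'F_p, slp_computes PB (fun w : 'cV_(m * s) => B *m w)
                           /\ (slp_cost PB <= mu (m * s)%N)%N) ->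
    (exists Pu : slp 'F_p, slp_computes Pu (fun w : 'cV_(m * s) => u *m w)
                           /\ (slp_cost Pu <= C * (m * s) * lg (m * s) ^ c)%N) ->
    (exists Pv : slp 'F_p, slp_computes Pv (fun x : 'cV_s => v *m x)
                           /\ (slp_cost Pv <= C * (m * s) * lg (m * s) ^ c)%N) ->
    (exists PH : slp 'F_p,
        slp_computes PH (fun y : 'cV_(m * s) =>
                           invmx (krylovU B u *m B *m krylovV B v) *m y)
        /\ (slp_cost PH <= C * ((m * s) * s) * lg ((m * s) * s) ^ c)%N) ->
    exists P : slp 'F_p,
      slp_computes P (fun w : 'cV_(m * s) => invmx B *m w)
      /\ (slp_cost P <= 2 * (m - 1) * mu (m * s)%N
                        + C' * ((m * s) * (m + s)) * lg ((m * s) * (m + s)) ^ c')%N.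
Proof.
move=> c C; exists c, (2 * C + 8)%N => p m s mu B u v _ m_gt0 s_gt0 B_unit U_unit V_unit
  [PB [PB_B cB]] [Pu [Pu_u cu]] [Pv [Pv_v cv]] [PH [PH_invH ch]].
exists (inverse_slp m s PB Pu Pv PH); split.
  exact: inverse_slp_computes PB_B Pu_u Pv_v PH_invH m_gt0 B_unit U_unit V_unit.
rewrite (inverse_slp_cost PB_B Pu_u Pv_v PH_invH m_gt0).
set X := (lg (m * s * (m + s)) ^ c)%N.
have lg_n : (lg (m * s) ^ c <= X)%N.
  by apply: leq_lg_exp; rewrite leq_pmulr // addn_gt0 m_gt0.
have lg_ns : (lg (m * s * s) ^ c <= X)%N.
  by apply: leq_lg_exp; rewrite leq_mul2l leq_addl orbT.
apply: inverse_cost_bound; rewrite ?expn_gt0 //.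
- by apply: leq_trans cu _; rewrite leq_mul2l lg_n orbT.
- by apply: leq_trans cv _; rewrite leq_mul2l lg_n orbT.
- by apply: leq_trans ch _; rewrite leq_mul2l lg_ns orbT.
Qed.
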